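(* For every $\phi\in\mathcal{L}_{\Box\!\!\rightarrow}$, if $\vdash\phi$ in $\mathbb{N}4\mathbb{CK}$, then $\phi\in\mathsf{N4CK}$ (i.e. $\phi$ is verified at every point of every Nelsonian conditional model).
   Context: $\mathcal{L}_{\Box\!\!\rightarrow}$ is built from propositional variables with $\wedge,\vee,\to$, strong negation $\sim$, and a binary would-conditional $\Box\!\!\rightarrow$; $\phi\Diamond\!\!\rightarrow\psi$ abbreviates $\sim(\phi\Box\!\!\rightarrow\sim\psi)$. Semantics: a Nelsonian conditional model is $\mathcal{M}=(W,\leq,R,V^+,V^-)$ with $W\neq\emptyset$, $\leq$ a preorder, $V^\pm$ assigning $\leq$-upward-closed sets to variables, $R\subseteq W\times(\mathcal{P}(W)\times\mathcal{P}(W))\times W$ (write $R_{(X,Y)}(w,v)$) such that for all $X,Y$: (c1) $w\leq w'$ and $R_{(X,Y)}(w,v)$ imply $R_{(X,Y)}(w',v')$ for some $v'\geq v$; (c2) $R_{(X,Y)}(w,v)$ and $v\leq v'$ imply $R_{(X,Y)}(w',v')$ for some $w'\geq w$. Verification $\models^+$ / falsification $\models^-$: atoms by $V^\pm$; $\wedge$ verified iff both verified, falsified iff one falsified; $\vee$ dually; $\sim$ swaps $\models^+,\models^-$; $w\models^+\psi\to\chi$ iff for all $v\geq w$, $v\models^+\psi$ implies $v\models^+\chi$; $w\models^-\psi\to\chi$ iff $w\models^+\psi$ and $w\models^-\chi$; $w\models^+\psi\Box\!\!\rightarrow\chi$ iff for all $v\geq w$ and $u$ with $R_{\|\psi\|}(v,u)$,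 $u\models^+\chi$; $w\models^-\psi\Box\!\!\rightarrow\chi$ iff some $u$ has $R_{\|\psi\|}(w,u)$ and $u\models^-\chi$; $\|\psi\|=(\{w\mid w\models^+\psi\},\{w\mid w\models^-\psi\})$. Abbreviations: $\leftrightarrow$ is mutual $\to$; $\phi\Rightarrow\psi:=(\phi\to\psi)\wedge(\sim\psi\to\sim\phi)$; $\phi\Leftrightarrow\psi:=(\phi\Rightarrow\psi)\wedge(\psi\Rightarrow\phi)$. $\mathbb{N}4\mathbb{CK}$: modus ponens; positive intuitionistic axiom schemes; $\sim\sim\phi\leftrightarrow\phi$, $\sim(\phi\wedge\psi)\leftrightarrow(\sim\phi\vee\sim\psi)$, $\sim(\phi\vee\psi)\leftrightarrow(\sim\phi\wedge\sim\psi)$, $\sim(\phi\to\psi)\leftrightarrow(\phi\wedge\sim\psi)$; (A1) $((\phi\Box\!\!\rightarrow\psi)\wedge(\phi\Box\!\!\rightarrow\chi))\Leftrightarrow(\phi\Box\!\!\rightarrow(\psi\wedge\chi))$; (A2) $(\sim(\phi\Box\!\!\rightarrow\psi)\wedge(\phi\Box\!\!\rightarrow\chi))\to\sim(\phi\Box\!\!\rightarrow(\psi\vee\sim\chi))$; (A3) $((\phi\Diamond\!\!\rightarrow\psi)\to(\phi\Box\!\!\rightarrow\chi))\to(\phi\Box\!\!\rightarrow(\psi\to\chi))$; (A4) $\phi\Box\!\!\rightarrow(\psi\to\psi)$; rules: from $\phi\Leftrightarrow\psi$ infer $(\phi\Box\!\!\rightarrow\chi)\Leftrightarrow(\psi\Box\!\!\rightarrow\chi)$;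 from $\phi\leftrightarrow\psi$ infer $(\chi\Box\!\!\rightarrow\phi)\leftrightarrow(\chi\Box\!\!\rightarrow\psi)$; from $\sim\phi\leftrightarrow\sim\psi$ infer $\sim(\chi\Box\!\!\rightarrow\phi)\leftrightarrow\sim(\chi\Box\!\!\rightarrow\psi)$. *)

Inductive form : Type :=
| Var : nat -> form
| And : form -> form -> form
| Or : form -> form -> form
| Imp : form -> form -> form
| SNeg : form -> form
| Box : form -> form -> form.

Definition Diam (a b : form) : form := SNeg (Box a (SNeg b)).
Definition Iff (a b : form) : form := And (Imp a b) (Imp b a).
Definition SImp (a b : form) : form := And (Imp a b) (Imp (SNeg b) (SNeg a)).
Definition SIff (a b : form) : form := And (SImp a b) (SImp b a).

(* Nelsonian conditional models.  Subsets of W are predicates W -> Prop;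
   R is indexed by pairs (X, Y) of subsets, written here as R X Y w v. *)
Record model : Type := {
  W : Type;
  W_inhabited : inhabited W;
  le : W -> W -> Prop;
  le_refl : forall w, le w w;
  le_trans : forall u v w, le u v -> le v w -> le u w;
  Vp : nat -> W -> Prop;
  Vm : nat -> W -> Prop;
  Vp_up : forall p w w', le w w' -> Vp p w -> Vp p w';
  Vm_up : forall p w w', le w w' -> Vm p w -> Vm p w';
  R : (W -> Prop) -> (W -> Prop) -> W -> W -> Prop;
  R_c1 : forall X Y w w' v, le w w' -> R X Y w v ->
           exists v', le v v' /\ R X Y w' v';
  R_c2 : forall X Y w v v', R X Y w v -> le v v' ->
           exists w', le w w' /\ R X Y w' v'
}.

Fixpoint ver (M : model) (phi : form) : W M -> Prop :=
  match phi with
  | Var p => fun w => Vp M p w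
  | And a b => fun w => ver M a w /\ ver M b w
  | Or a b => fun w => ver M a w \/ ver M b w
  | Imp a b => fun w => forall v, le M w v -> ver M a v -> ver M b v
  | SNeg a => fun w => fal M a w
  | Box a b => fun w => forall v u, le M w v -> R M (ver M a) (fal M a) v u ->
                                    ver M b u
  end
with fal (M : model) (phi : form) : W M -> Prop :=
  match phi with
  | Var p => fun w => Vm M p w
  | And a b => fun w => fal M a w \/ fal M b w
  | Or a b => fun w => fal M a w /\ fal M b w
  | Imp a b => fun w => ver M a w /\ fal M b w
  | SNeg a => fun w => ver M a w
  | Box a b => fun w => exists u, R M (ver M a) (fal M a) w u /\ fal M b u
  end.

Definition N4CK_valid (phi : form) : Prop :=
  forall (M : model) (w : W M), ver M phi w.

Inductive prov : form -> Prop :=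
| ax_K : forall a b, prov (Imp a (Imp b a))
| ax_S : forall a b c, prov (Imp (Imp a (Imp b c)) (Imp (Imp a b) (Imp a c)))
| ax_andE1 : forall a b, prov (Imp (And a b) a)
| ax_andE2 : forall a b, prov (Imp (And a b) b)
| ax_andI : forall a b, prov (Imp a (Imp b (And a b)))
| ax_orI1 : forall a b, prov (Imp a (Or a b))
| ax_orI2 : forall a b, prov (Imp b (Or a b))
| ax_orE : forall a b c, prov (Imp (Imp a c) (Imp (Imp b c) (Imp (Or a b) c)))
| ax_nn : forall a, prov (Iff (SNeg (SNeg a)) a)
| ax_nand : forall a b, prov (Iff (SNeg (And a b)) (Or (SNeg a) (SNeg b)))
| ax_nor : forall a b, prov (Iff (SNeg (Or a b)) (And (SNeg a) (SNeg b)))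
| ax_nimp : forall a b, prov (Iff (SNeg (Imp a b)) (And a (SNeg b)))
| ax_A1 : forall a b c,
    prov (SIff (And (Box a b) (Box a c)) (Box a (And b c)))
| ax_A2 : forall a b c,
    prov (Imp (And (SNeg (Box a b)) (Box a c)) (SNeg (Box a (Or b (SNeg c)))))
| ax_A3 : forall a b c,
    prov (Imp (Imp (Diam a b) (Box a c)) (Box a (Imp b c)))
| ax_A4 : forall a b, prov (Box a (Imp b b))
| r_MP : forall a b, prov (Imp a b) -> prov a -> prov b
| r_RA : forall a b c, prov (SIff a b) -> prov (SIff (Box a c) (Box b c))
| r_RC : forall a b c, prov (Iff a b) -> prov (Iff (Box c a) (Box c b))
| r_RCneg : forall a b c, prov (Iff (SNeg a) (SNeg b)) ->
    prov (Iff (SNeg (Box c a)) (SNeg (Box c b))).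

(* Everything rests on persistence:
   verification and falsification are upward closed along [le] (for a
   falsified conditional this is condition (c1)).  Axiom A3 is the one place
   where condition (c2) is needed, and rule RA needs extensionality because
   [R] is indexed by the truth and falsity sets of the antecedent. *)

From Stdlib Require Import FunctionalExtensionality PropExtensionality.

Lemma ver_fal_mono (M : model) (phi : form) :
  (forall w w', le M w w' -> ver M phi w -> ver M phi w') /\
  (forall w w', le M w w' -> fal M phi w -> fal M phi w').
Proof.
  induction phi as [p|a IHa b IHb|a IHa b IHb|a IHa b IHb|a IHa|a IHa b IHb];
    simpl; split; intros w w' Hww' H.
  - now apply Vp_up with w.
  - now apply Vm_up with w.
  - split; [apply (proj1 IHa) with w | apply (proj1 IHb) with w]; tauto.
  - destruct H; [left; apply (proj2 IHa) with w | right; apply (proj2 IHb) with w];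
      assumption.
  - destruct H; [left; apply (proj1 IHa) with w | right; apply (proj1 IHb) with w];
      assumption.
  - split; [apply (proj2 IHa) with w | apply (proj2 IHb) with w]; tauto.
  - intros v Hw'v. apply H, le_trans with w'; assumption.
  - split; [apply (proj1 IHa) with w | apply (proj2 IHb) with w]; tauto.
  - now apply (proj2 IHa) with w.
  - now apply (proj1 IHa) with w.
  - intros v u Hw'v. apply H, le_trans with w'; assumption.
  - destruct H as [u [Hwu Hu]].
    destruct (R_c1 M _ _ _ _ _ Hww' Hwu) as [u' [Huu' Hw'u']].
    exists u'. split; [assumption | now apply (proj2 IHb) with u].
Qed.

Lemma ver_mono M phi w w' : le M w w' -> ver M phi w -> ver M phi w'.
Proof. apply ver_fal_mono. Qed.

Lemma N4CK_valid_MP a b : N4CK_valid (Imp a b) -> N4CK_valid a -> N4CK_valid b.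
Proof. intros Hab Ha M w. apply (Hab M w w); [apply le_refl | apply Ha]. Qed.

Lemma N4CK_valid_Imp a b :
  (forall M w, ver M a w -> ver M b w) -> N4CK_valid (Imp a b).
Proof. intros Hab M w v _. apply Hab. Qed.

Lemma N4CK_valid_Iff a b :
  N4CK_valid (Iff a b) <-> forall M w, ver M a w <-> ver M b w.
Proof.
  split.
  - intros Hab M w. destruct (Hab M w) as [Hl Hr].
    split; [apply Hl | apply Hr]; apply le_refl.
  - intros Hab M w. split; intros v _; apply Hab.
Qed.

Lemma N4CK_valid_SIff a b :
  N4CK_valid (SIff a b) <->
  forall M w, (ver M a w <-> ver M b w) /\ (fal M a w <-> fal M b w).
Proof.
  split.
  - intros Hab M w. destruct (Hab M w) as [[Hl Hl'] [Hr Hr']].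
    repeat split; [apply Hl | apply Hr | apply Hr' | apply Hl']; apply le_refl.
  - intros Hab M w. repeat split; intros v _; apply Hab.
Qed.

Lemma valid_ax_K a b : N4CK_valid (Imp a (Imp b a)).
Proof. intros M w v _ Ha u Hvu _. now apply ver_mono with v. Qed.

Lemma valid_ax_S a b c :
  N4CK_valid (Imp (Imp a (Imp b c)) (Imp (Imp a b) (Imp a c))).
Proof.
  intros M w v1 _ Habc v2 Hv1v2 Hab v3 Hv2v3 Ha.
  apply (Habc v3 (le_trans _ _ _ _ Hv1v2 Hv2v3) Ha v3 (le_refl _ _)).
  now apply Hab.
Qed.

Lemma valid_ax_andI a b : N4CK_valid (Imp a (Imp b (And a b))).
Proof. intros M w v _ Ha u Hvu Hb. split; [now apply ver_mono with v | exact Hb]. Qed.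

Lemma valid_ax_orE a b c :
  N4CK_valid (Imp (Imp a c) (Imp (Imp b c) (Imp (Or a b) c))).
Proof.
  intros M w v1 _ Hac v2 Hv1v2 Hbc v3 Hv2v3 [Ha | Hb].
  - exact (Hac v3 (le_trans _ _ _ _ Hv1v2 Hv2v3) Ha).
  - exact (Hbc v3 Hv2v3 Hb).
Qed.

Lemma valid_ax_A1 a b c :
  N4CK_valid (SIff (And (Box a b) (Box a c)) (Box a (And b c))).
Proof.
  apply N4CK_valid_SIff. intros M w. simpl. split; split.
  - intros [Hb Hc] v u Hwv Hvu. split; [apply (Hb v u) | apply (Hc v u)]; assumption.
  - intros Hbc. split; intros v u Hwv Hvu; apply (Hbc v u Hwv Hvu).
  - intros [[u [Hwu Hb]] | [u [Hwu Hc]]]; exists u; tauto.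
  - intros [u [Hwu [Hb | Hc]]]; [left | right]; exists u; tauto.
Qed.

Lemma valid_ax_A2 a b c :
  N4CK_valid (Imp (And (SNeg (Box a b)) (Box a c)) (SNeg (Box a (Or b (SNeg c))))).
Proof.
  apply N4CK_valid_Imp. intros M w [[u [Hwu Hb]] Hc].
  exists u. repeat split; [assumption | assumption | exact (Hc w u (le_refl _ _) Hwu)].
Qed.

Lemma valid_ax_A3 a b c :
  N4CK_valid (Imp (Imp (Diam a b) (Box a c)) (Box a (Imp b c))).
Proof.
  intros M w v _ Hbc x u Hvx Hxu u' Huu' Hb.
  (* by (c2), u' is itself an R-successor of some x' above x, where [Diam a b] holds *)
  destruct (R_c2 M _ _ _ _ _ Hxu Huu') as [x' [Hxx' Hx'u']].
  assert (Hdiam : ver M (Diam a b) x') by now exists u'.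
  exact (Hbc x' (le_trans _ _ _ _ Hvx Hxx') Hdiam x' u' (le_refl _ _) Hx'u').
Qed.

Lemma valid_ax_A4 a b : N4CK_valid (Box a (Imp b b)).
Proof. intros M w v u _ _ x _ Hb. exact Hb. Qed.

Lemma valid_r_RA a b c :
  N4CK_valid (SIff a b) -> N4CK_valid (SIff (Box a c) (Box b c)).
Proof.
  rewrite !N4CK_valid_SIff. intros Hab M w.
  assert (Hver : ver M a = ver M b).
  { extensionality x. apply propositional_extensionality, Hab. }
  assert (Hfal : fal M a = fal M b).
  { extensionality x. apply propositional_extensionality, Hab. }
  simpl. rewrite Hver, Hfal. tauto.
Qed.

Lemma valid_r_RC a b c :
  N4CK_valid (Iff a b) -> N4CK_valid (Iff (Box c a) (Box c b)).
Proof.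
  rewrite !N4CK_valid_Iff. intros Hab M w. simpl.
  split; intros H v u Hwv Hvu; apply Hab, (H v u Hwv Hvu).
Qed.

Lemma valid_r_RCneg a b c :
  N4CK_valid (Iff (SNeg a) (SNeg b)) ->
  N4CK_valid (Iff (SNeg (Box c a)) (SNeg (Box c b))).
Proof.
  rewrite !N4CK_valid_Iff. intros Hab M w. simpl in *.
  split; intros [u [Hwu Hu]]; exists u; split; try assumption; apply Hab, Hu.
Qed.

Theorem lemma3 : forall phi : form, prov phi -> N4CK_valid phi.
Proof.
  induction 1.
  - apply valid_ax_K.
  - apply valid_ax_S.
  - apply N4CK_valid_Imp. now intros M w [Ha _].
  - apply N4CK_valid_Imp. now intros M w [_ Hb].
  - apply valid_ax_andI.
  - apply N4CK_valid_Imp. now left.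
  - apply N4CK_valid_Imp. now right.
  - apply valid_ax_orE.
  (* the two sides of each strong negation axiom have convertible clauses *)
  - apply N4CK_valid_Iff. reflexivity.
  - apply N4CK_valid_Iff. reflexivity.
  - apply N4CK_valid_Iff. reflexivity.
  - apply N4CK_valid_Iff. reflexivity.
  - apply valid_ax_A1.
  - apply valid_ax_A2.
  - apply valid_ax_A3.
  - apply valid_ax_A4.
  - exact (N4CK_valid_MP _ _ IHprov1 IHprov2).
  - now apply valid_r_RA.
  - now apply valid_r_RC.
  - now apply valid_r_RCneg.
Qed.
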